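(* Let $\alpha\ge\omega^\omega$ be a multiplicatively indecomposable ordinal. Then $\sup_{\alpha'<\alpha}\mathbf{w}(P_{\alpha'})\ge\alpha$.
   Context: For an ordinal $\alpha$, $P_\alpha=\{(\beta_0,\beta_1):\beta_0\le\beta_1<\alpha\}$ ordered componentwise ($(\beta_0,\beta_1)\le(\gamma_0,\gamma_1)$ iff $\beta_0\le\gamma_0$ and $\beta_1\le\gamma_1$); it is a wqo. $\mathbf{w}(A)$ (width) is the rank of the root of the well-founded tree of finite sequences of pairwise incomparable elements of $A$ (root: empty sequence, children: one-element extensions; rank $r(s)=\sup\{r(t)+1: t\text{ child of } s\}$). Multiplicatively indecomposable ordinals $\ge\omega$ are those of the form $\omega^{\omega^\gamma}$. *)

(* Ordinals are represented by well-ordered types: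
   an ordinal alpha is the order type of (A, lt); an ordinal beta < alpha is
   the order type of the initial segment {x | lt x b} for some b : A. *)
From Stdlib Require Import List Arith.
Import ListNotations.
Set Implicit Arguments.

Section Ord.
Variables (A : Type) (lt : A -> A -> Prop).

Definition le (x y : A) : Prop := lt x y \/ x = y.

Definition is_wellorder : Prop :=
  (forall x, ~ lt x x) /\
  (forall x y z, lt x y -> lt y z -> lt x z) /\
  (forall x y, lt x y \/ x = y \/ lt y x) /\
  well_founded lt.

(* Multiplicative indecomposability of alpha = ot(A):
   for all beta = ot{x < b}, gamma = ot{y < c}, the ordinal product
   beta * gamma (= gamma copies of beta, i.e. pairs (y,x) ordered
   lexicographically with y most significant) is < alpha, i.e. it embeds
   strictly increasingly into some proper initial segment {z < a}. *)
Definition mult_indecomposable : Prop :=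
  forall b c : A, exists (a : A) (f : A * A -> A),
    (forall y x, lt y c -> lt x b -> lt (f (y, x)) a) /\
    (forall y x y' x', lt y c -> lt x b -> lt y' c -> lt x' b ->
        (lt y y' \/ (y = y' /\ lt x x')) -> lt (f (y, x)) (f (y', x'))).

End Ord.

(* strict lexicographic order on lists of nat of equal length;
   (nat^n, lexlt) has order type omega^n *)
Inductive lexlt : list nat -> list nat -> Prop :=
| lexlt_head x y l l' : x < y -> length l = length l' -> lexlt (x :: l) (y :: l')
| lexlt_tail x l l' : lexlt l l' -> lexlt (x :: l) (x :: l').

(* omega^n <= ot(A,lt) : strictly increasing map from omega^n into A *)
Definition omega_pow_le (A : Type) (lt : A -> A -> Prop) (n : nat) : Prop :=
  exists f : list nat -> A, forall u v, length u = n -> length v = n ->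
    lexlt u v -> lt (f u) (f v).

(* omega^omega = sup_n omega^n <= ot(A,lt) *)
Definition omega_omega_le (A : Type) (lt : A -> A -> Prop) : Prop :=
  forall n, omega_pow_le lt n.

(* Rank in a tree given by a child relation:
   rank_ge ch lt s b  <->  r(s) >= ot{x | lt x b},
   where r(s) = sup { r(t) + 1 : ch s t }. *)
Inductive rank_ge (X A : Type) (ch : X -> X -> Prop) (lt : A -> A -> Prop)
    (s : X) (b : A) : Prop :=
| rank_ge_intro :
    (forall b', lt b' b -> exists t, ch s t /\ rank_ge ch lt t b') ->
    rank_ge ch lt s b.

Section Width.
Variables (A : Type) (lt : A -> A -> Prop).

Definition P_elem (a : A) (p : A * A) : Prop :=
  le lt (fst p) (snd p) /\ lt (snd p) a.

Definition P_le (p q : A * A) : Prop :=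
  le lt (fst p) (fst q) /\ le lt (snd p) (snd q).

Definition incomparable (p q : A * A) : Prop := ~ P_le p q /\ ~ P_le q p.

Definition antichain_seq (a : A) (s : list (A * A)) : Prop :=
  Forall (P_elem a) s /\ ForallOrdPairs incomparable s.

Definition width_child (a : A) (s t : list (A * A)) : Prop :=
  exists p, t = s ++ [p] /\ antichain_seq a t.

(* w(P_a) > ot{x | lt x b}  (rank of the root [] exceeds ot{x < b}) *)
Definition width_gt (a b : A) : Prop :=
  exists t, width_child a [] t /\ rank_ge (width_child a) lt t b.

End Width.

From Stdlib Require Import List Classical.
Import ListNotations.
Set Implicit Arguments.

(* Let e_0 < e_1 < ... be an omega-sequence below a and let g embed beta
   increasingly below e_0.  If every pair of an antichain t of P_a lies in the
   box [x, e_k] (first coordinate >= x, second <= e_k), then for any z < beta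
   with g z < x, the pair (g z, e_(k+1)) is incomparable with all of t, and the
   extended antichain lies in the box [g z, e_(k+1)].  Each step may choose any
   smaller z, so the root of the antichain tree has rank at least beta.
   Multiplicative indecomposability puts such a configuration below some
   a < alpha: embed beta * (omega + 1) below a by f and take
   e_k = f(k + 1, w) and g z = f(0, z). *)

Lemma ForallOrdPairs_app_r (T : Type) (R : T -> T -> Prop) (l : list T) (p : T) :
  ForallOrdPairs R l -> Forall (fun q => R q p) l -> ForallOrdPairs R (l ++ [p]).
Proof.
  induction l as [|q l IH]; intros Hl Hp; simpl.
  - repeat constructor.
  - inversion Hl; inversion Hp; subst.
    constructor; [apply Forall_app|apply IH]; auto.
Qed.

Section Ladder.
Variables (A : Type) (lt : A -> A -> Prop).
Hypothesis lt_irrefl : forall x, ~ lt x x.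
Hypothesis lt_trans : forall x y z, lt x y -> lt y z -> lt x z.
Hypothesis lt_wf : well_founded lt.

Lemma le_lt_trans x y z : le lt x y -> lt y z -> lt x z.
Proof. intros [Hxy|<-] Hyz; eauto. Qed.

Lemma lt_le_trans x y z : lt x y -> le lt y z -> lt x z.
Proof. intros Hxy [Hyz|<-]; eauto. Qed.

Definition boxed (x y : A) (t : list (A * A)) : Prop :=
  Forall (fun p => le lt x (fst p) /\ le lt (snd p) y) t.

Lemma boxed_incomparable x y x' y' t :
  boxed x y t -> lt x' x -> lt y y' ->
  Forall (fun q => incomparable lt q (x', y')) t.
Proof.
  intros Ht Hx Hy; eapply Forall_impl; [|exact Ht].
  intros [p1 p2] [Hp1 Hp2]; simpl in *; split.
  - intros [H _]; simpl in H.
    apply (lt_irrefl (x := x)); eapply le_lt_trans; [exact Hp1|].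
    eapply le_lt_trans; eassumption.
  - intros [_ H]; simpl in H.
    apply (lt_irrefl (x := y')); eapply le_lt_trans; [exact H|].
    eapply le_lt_trans; eassumption.
Qed.

Lemma boxed_snoc x y x' y' t :
  boxed x y t -> lt x' x -> lt y y' -> boxed x' y' (t ++ [(x', y')]).
Proof.
  intros Ht Hx Hy; apply Forall_app; split.
  - eapply Forall_impl; [|exact Ht].
    intros p [Hp1 Hp2]; split; left.
    + eapply lt_le_trans; eassumption.
    + eapply le_lt_trans; eassumption.
  - constructor; [split; right; reflexivity|constructor].
Qed.

Lemma antichain_snoc a x y x' y' t :
  antichain_seq lt a t -> boxed x y t -> le lt x y ->
  lt x' x -> lt y y' -> lt y' a ->
  antichain_seq lt a (t ++ [(x', y')]).
Proof.
  intros [Hel Hfop] Ht Hxy Hx Hy Ha; split.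
  - apply Forall_app; split; [exact Hel|].
    constructor; [|constructor]; split; [left|exact Ha]; simpl.
    eapply lt_trans; [eapply lt_le_trans; eassumption|exact Hy].
  - apply ForallOrdPairs_app_r; [exact Hfop|].
    eapply boxed_incomparable; eassumption.
Qed.

Variables (a : A) (e : nat -> A).
Hypothesis e_increasing : forall k, lt (e k) (e (S k)).
Hypothesis e_below : forall k, lt (e k) a.

Lemma rank_ge_boxed_antichain (g : A -> A) :
  forall b t x k,
    antichain_seq lt a t -> boxed x (e k) t -> le lt x (e k) ->
    (forall z, lt z b -> lt (g z) x) ->
    (forall z z', lt z z' -> lt z' b -> lt (g z) (g z')) ->
    rank_ge (width_child lt a) lt t b.
Proof.
  intro b; induction b as [b IH] using (well_founded_ind lt_wf).
  intros t x k Ht Hbox Hxk Hgx Hgmono.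
  constructor; intros b' Hb'.
  assert (Hnext : antichain_seq lt a (t ++ [(g b', e (S k))]))
    by (eapply antichain_snoc; eauto).
  exists (t ++ [(g b', e (S k))]); split; [exists (g b', e (S k)); auto|].
  apply (IH b' Hb' _ (g b') (S k) Hnext).
  - eapply boxed_snoc; eauto.
  - left; eapply lt_trans; [eapply lt_le_trans; eauto|apply e_increasing].
  - intros z Hz; apply Hgmono; auto.
  - intros z z' Hzz' Hz'; apply Hgmono; eauto.
Qed.

Lemma width_gt_of_ladder (g : A -> A) b :
  (forall z, lt z b -> lt (g z) (e 0)) ->
  (forall z z', lt z z' -> lt z' b -> lt (g z) (g z')) ->
  width_gt lt a b.
Proof.
  intros Hg0 Hgmono.
  assert (Hsingle : antichain_seq lt a [(e 0, e 0)]).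
  { split.
    - constructor; [split; [right; reflexivity|apply e_below]|constructor].
    - repeat constructor. }
  exists [(e 0, e 0)]; split; [exists (e 0, e 0); auto|].
  apply rank_ge_boxed_antichain with (g := g) (x := e 0) (k := 0); auto.
  - repeat constructor; right; reflexivity.
  - right; reflexivity.
Qed.

End Ladder.

Lemma width_gt_of_minimal (A : Type) (lt : A -> A -> Prop) (x y b : A) :
  (forall z, ~ lt z b) -> lt x y -> width_gt lt y b.
Proof.
  intros Hmin Hxy.
  exists [(x, x)]; split.
  - exists (x, x); split; [reflexivity|].
    split.
    + constructor; [split; [right; reflexivity|exact Hxy]|constructor].
    + repeat constructor.
  - constructor; intros b' Hb'; exfalso; exact (Hmin b' Hb').
Qed.

Lemma omega_succ_of_omega_pow_2 (A : Type) (lt : A -> A -> Prop) :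
  omega_pow_le lt 2 ->
  exists (c : A) (s : nat -> A), (forall n, lt (s n) (s (S n))) /\ (forall n, lt (s n) c).
Proof.
  intros [h Hh].
  exists (h [1; 0]), (fun n => h [0; n]); split; intro n; apply Hh; auto.
  - apply lexlt_tail, lexlt_head; auto.
  - apply lexlt_head; auto.
Qed.

Theorem mainTheorem16 (A : Type) (lt : A -> A -> Prop)
  (Hwo : is_wellorder lt)
  (Hind : mult_indecomposable lt)
  (Hbig : omega_omega_le lt) :
  forall b : A, exists a : A, width_gt lt a b.
Proof.
  destruct Hwo as [lt_irrefl [lt_trans [_ lt_wf]]].
  intro b.
  destruct (classic (exists w, lt w b)) as [[w Hw]|Hmin].
  - destruct (omega_succ_of_omega_pow_2 (Hbig 2)) as [c [s [Hs Hsc]]].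
    destruct (Hind b c) as [a [f [Hfa Hfmono]]].
    exists a.
    apply width_gt_of_ladder with (e := fun k => f (s (S k), w)) (g := fun z => f (s 0, z));
      try assumption.
    + intro k; apply Hfmono; auto.
    + intro k; apply Hfa; auto.
    + intros z Hz; apply Hfmono; auto.
    + intros z z' Hzz' Hz'; apply Hfmono; eauto.
  - destruct (Hbig 1) as [h Hh].
    exists (h [1]); apply width_gt_of_minimal with (x := h [0]).
    + intros z Hz; apply Hmin; eauto.
    + apply Hh; repeat constructor.
Qed.
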